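(* Assume the system $\dot x(t)=f(x_t,u(t))$ as in the context is robustly forward complete. Let $S\subseteq\mathcal X^n$ be compact, $\mathcal U\subseteq\mathbb R^m$ bounded and $T>0$. Then the closure in $\mathcal X^n$ of $\mathcal R^T_{\mathcal U}(S)=\{x_t^{\xi,u}:\ 0\le t\le T,\ u\in\mathcal M_{\mathcal U},\ \xi\in S\}$ is compact.
   Context: Fix $\theta>0$; $\mathcal X^n=C([-\theta,0],\mathbb R^n)$ with norm $\|\xi\|_{\mathcal X}=\max_{s\in[-\theta,0]}|\xi(s)|$; $x_t(s)=x(t+s)$. $\mathcal M$: measurable locally essentially bounded $u:\mathbb R_{\ge0}\to\mathbb R^m$, $\|u\|$ the essential supremum on $[0,\infty)$; $\mathcal M_{\mathcal U}$: those with values in $\mathcal U$. $f:\mathcal X^n\times\mathbb R^m\to\mathbb R^n$ is locally Lipschitz and maps bounded sets to bounded sets; $x(\cdot,\xi,u)$ is the unique maximal solution with $x(s)=\xi(s)$ on $[-\theta,0]$ and input $u$, and $x_t^{\xi,u}(s)=x(t+s,\xi,u)$. Robustly forward complete: every maximal solution is defined for all $t\ge0$ and for every $T,R>0$, $\sup\{\|x_t^{\xi,u}\|_{\mathcal X}:\|\xi\|_{\mathcal X}\le R,\|u\|\le R,t\in[0,T]\}<\infty$. *)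

From HB Require Import structures.
From mathcomp Require Import all_boot all_order all_algebra.
From mathcomp Require Import all_classical all_reals all_analysis.
Set Implicit Arguments. Unset Strict Implicit. Unset Printing Implicit Defensive.
Import Order.TTheory GRing.Theory Num.Theory.
Import numFieldNormedType.Exports.
Local Open Scope classical_set_scope.
Local Open Scope ring_scope.

Definition delay_int {R : realType} (θ : R) : set R := `[- θ, 0]%classic.

(** The state space X^n = C([-θ,0], R^n), modelled by functions R -> R^n
    (only the values on [-θ,0] matter) carrying the topology of uniform
    convergence on [-θ,0], i.e. the topology of the sup norm. *)
Definition Xspace {R : realType} (θ : R) (n : nat) : Type :=
  {uniform` delay_int θ -> 'rV[R]_n}.

Definition in_X {R : realType} {n : nat} (θ : R) (ξ : R -> 'rV[R]_n) : Prop :=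
  {within delay_int θ, continuous ξ}.

Definition Xnorm {R : realType} {n : nat} (θ : R) (ξ : R -> 'rV[R]_n) : R :=
  sup [set `|ξ s| | s in delay_int θ].

Definition hist_at {R : realType} {n : nat} (x : R -> 'rV[R]_n) (t : R) : R -> 'rV[R]_n :=
  fun s => x (t + s).

Definition ess_bounded_by {R : realType} {m : nat} (u : R -> 'rV[R]_m) (r : R) : Prop :=
  {ae (@lebesgue_measure R), forall t, `[0%R : R, +oo[%classic t -> `|u t| <= r}.

Definition input_M {R : realType} {m : nat} (u : R -> 'rV[R]_m) : Prop :=
  (forall j : 'I_m, measurable_fun `[0%R : R, +oo[%classic (fun t => u t ord0 j)) /\
  (forall T : R, exists r : R,
     {ae (@lebesgue_measure R), forall t, `[0%R : R, T]%classic t -> `|u t| <= r}).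

Definition input_MU {R : realType} {m : nat} (U : set 'rV[R]_m) (u : R -> 'rV[R]_m) : Prop :=
  input_M u /\ (forall t, 0 <= t -> U (u t)).

Definition f_local {R : realType} {n m : nat} (θ : R)
  (f : (R -> 'rV[R]_n) -> 'rV[R]_m -> 'rV[R]_n) : Prop :=
  forall ξ η v, in_X θ ξ -> in_X θ η -> {in delay_int θ, ξ =1 η} -> f ξ v = f η v.

Definition f_locally_lipschitz {R : realType} {n m : nat} (θ : R)
  (f : (R -> 'rV[R]_n) -> 'rV[R]_m -> 'rV[R]_n) : Prop :=
  forall ξ0 v0, in_X θ ξ0 ->
  exists r : R, exists L : R, 0 < r /\
    forall ξ η v w, in_X θ ξ -> in_X θ η ->
      Xnorm θ (ξ \- ξ0) < r -> Xnorm θ (η \- ξ0) < r ->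
      `|v - v0| < r -> `|w - v0| < r ->
      `|f ξ v - f η w| <= L * (Xnorm θ (ξ \- η) + `|v - w|).

Definition f_bounded_on_bounded {R : realType} {n m : nat} (θ : R)
  (f : (R -> 'rV[R]_n) -> 'rV[R]_m -> 'rV[R]_n) : Prop :=
  forall r : R, exists K : R, forall ξ v, in_X θ ξ -> Xnorm θ ξ <= r -> `|v| <= r ->
    `|f ξ v| <= K.

(** x is a (Caratheodory) solution on [-θ, +oo) of  x'(t) = f(x_t, u(t)),
    x = ξ on [-θ,0], in integral form, componentwise. *)
Definition is_solution {R : realType} {n m : nat} (θ : R)
  (f : (R -> 'rV[R]_n) -> 'rV[R]_m -> 'rV[R]_n)
  (ξ : R -> 'rV[R]_n) (u : R -> 'rV[R]_m) (x : R -> 'rV[R]_n) : Prop :=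
  (forall s, delay_int θ s -> x s = ξ s) /\
  (forall t, 0 <= t -> forall i : 'I_n,
     (@lebesgue_measure R).-integrable `[0%R : R, t]%classic
        (fun s => ((f (hist_at x s) (u s)) ord0 i)%:E) /\
     x t ord0 i = ξ 0 ord0 i +
        Rintegral (@lebesgue_measure R) `[0%R : R, t]%classic
          (fun s => (f (hist_at x s) (u s)) ord0 i)).

Definition robustly_forward_complete {R : realType} {n m : nat} (θ : R)
  (f : (R -> 'rV[R]_n) -> 'rV[R]_m -> 'rV[R]_n) : Prop :=
  (forall ξ u, in_X θ ξ -> input_M u -> exists x, is_solution θ f ξ u x) /\
  (forall T r : R, 0 < T -> 0 < r -> exists K : R,
     forall ξ u x t, in_X θ ξ -> Xnorm θ ξ <= r -> input_M u -> ess_bounded_by u r ->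
       is_solution θ f ξ u x -> 0 <= t <= T -> Xnorm θ (hist_at x t) <= K).

Definition reach_set {R : realType} {n m : nat} (θ : R)
  (f : (R -> 'rV[R]_n) -> 'rV[R]_m -> 'rV[R]_n)
  (S : set (R -> 'rV[R]_n)) (U : set 'rV[R]_m) (T : R) : set (R -> 'rV[R]_n) :=
  [set y | exists t ξ u x, [/\ 0 <= t <= T, input_MU U u, S ξ,
             is_solution θ f ξ u x & y = hist_at x t]].

From HB Require Import structures.
From mathcomp Require Import all_boot all_order all_algebra.
From mathcomp Require Import all_classical all_reals all_analysis.
From mathcomp Require Import lra measurable_realfun.
Import Order.TTheory GRing.Theory Num.Theory.
Import numFieldNormedType.Exports.
Local Open Scope classical_set_scope.
Local Open Scope ring_scope.

(* By the Arzela-Ascoli theorem it suffices that the histories x_t, 0 <= t <= T,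
   making up the reachable set are uniformly bounded and uniformly equicontinuous
   on [-θ, 0].  Robust forward completeness bounds all these histories; as f maps
   bounded sets to bounded sets, the right-hand side f(x_s, u(s)) is then bounded
   by one constant K along all of these solutions, which are therefore K-Lipschitz
   on [0, T].  The compact set S of initial histories is uniformly bounded and
   uniformly equicontinuous, and x(t + s) = ξ(min(t + s, 0)) + x(max(t + s, 0)) - ξ(0)
   combines the two estimates. *)

Section MinMaxLipschitz.
Context {R : realDomainType}.
Implicit Types a b c : R.

Lemma ler_dist_min a b c : `|Num.min a c - Num.min b c| <= `|a - b|.
Proof.
rewrite ler_norml; case: (leP a c) => ac; case: (leP b c) => bc;
  case: (leP 0 (a - b)) => h; rewrite ?(ger0_norm h) ?(ltr0_norm h); apply/andP; split; lra.
Qed.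

Lemma ler_dist_max a b c : `|Num.max a c - Num.max b c| <= `|a - b|.
Proof.
rewrite ler_norml; case: (leP a c) => ac; case: (leP b c) => bc;
  case: (leP 0 (a - b)) => h; rewrite ?(ger0_norm h) ?(ltr0_norm h); apply/andP; split; lra.
Qed.

End MinMaxLipschitz.

Section RowVectorNorm.
Context {R : realDomainType} {n : nat}.
Implicit Types (v : 'rV[R]_n) (c : R).

Lemma rV_norm_le v c : 0 <= c -> (forall i, `|v ord0 i| <= c) -> `|v| <= c.
Proof.
move=> c_ge0 H; rewrite /Num.Def.normr /= mx_normrE (bigmax_le _ c_ge0) //= => -[i j] _.
by rewrite (ord1 i); exact: H.
Qed.

Lemma rV_norm_lt v c : 0 < c -> (forall i, `|v ord0 i| < c) -> `|v| < c.
Proof.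
move=> c_gt0 H; rewrite /Num.Def.normr /= mx_normrE (bigmax_lt _ c_gt0) //= => -[i j] _.
by rewrite (ord1 i); exact: H.
Qed.

Lemma ler_rV_coord_norm v i : `|v ord0 i| <= `|v|.
Proof.
by rewrite [X in _ <= X]/Num.Def.normr /= mx_normrE; apply/bigmax_geP; right; exists (ord0, i).
Qed.

End RowVectorNorm.

Section IntervalIntegral.
Context {R : realType}.
Local Notation mu := (@lebesgue_measure R).

Lemma le_normr_Rintegral_oc (h : R -> R) (q p K : R) : q <= p -> 0 <= K ->
  mu.-integrable `]q, p] (EFin \o h) -> (forall s, `]q, p]%classic s -> `|h s| <= K) ->
  `|\int[mu]_(s in `]q, p]) h s| <= K * (p - q).
Proof.
move=> qp K_ge0 h_int h_le; have m_qp : measurable `]q, p]%classic by exact: measurable_itv.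
have mu_qp : mu `]q, p]%classic = (p - q)%:E.
  rewrite lebesgue_measure_itv /= lte_fin; case: ltP => [_ | pq]; first by rewrite EFinB.
  by rewrite (@le_anti _ _ p q) ?subrr // pq qp.
have K_int : mu.-integrable `]q, p] (EFin \o cst K).
  apply/integrableP; split; first exact/measurable_EFinP/measurable_cst.
  rewrite (eq_integral (cst K%:E)) => [|s _]; last by rewrite /= ger0_norm.
  by rewrite integral_cst //= mu_qp -EFinM ltry.
apply: (le_trans (le_normr_Rintegral _ _)) => //.
apply: (le_trans (le_Rintegral _ _ _ _)); [exact: m_qp | exact: integrable_norm | exact: K_int | exact: h_le |].
(* Rintegral_cst exposes the measure through its structure projection, which
   mu_qp does not match syntactically. *)
by rewrite Rintegral_cst // (_ : fine (mu `]q, p]%classic) = p - q) ?mu_qp.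
Qed.

End IntervalIntegral.

Section DelayWindow.
Context {R : realType} {n : nat} {θ : R}.
Local Notation D := (delay_int θ).
Local Notation X := (Xspace θ n).
Local Notation fc := {family compact, R -> 'rV[R]_n}.
Implicit Types (a b s e d r M : R).

Lemma delay_intP s : D s <-> - θ <= s <= 0.
Proof. by rewrite /delay_int /= in_itv. Qed.

Lemma delay_int_compact : compact D.
Proof. exact: segment_compact. Qed.

Lemma delay_int0 : 0 <= θ -> D 0.
Proof. by move=> θ_ge0; apply/delay_intP; rewrite lexx oppr_le0 θ_ge0. Qed.

Lemma Xnorm_le (ξ : R -> 'rV[R]_n) M : 0 <= θ ->
  (forall s, D s -> `|ξ s| <= M) -> Xnorm θ ξ <= M.
Proof.
move=> θ_ge0 ξ_le; apply: ge_sup => [|_ [s Ds <-]]; last exact: ξ_le.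
by exists `|ξ 0|, 0 => //; exact: delay_int0.
Qed.

Lemma in_X_continuous_at {ξ : R -> 'rV[R]_n} {a e} : in_X θ ξ -> D a -> 0 < e ->
  exists2 r, 0 < r & forall b, D b -> `|a - b| < r -> `|ξ a - ξ b| < e.
Proof.
move=> /subspace_continuousP /(_ a) + Da e_gt0 => /(_ Da) /cvgrPdist_lt /(_ e e_gt0).
rewrite near_withinE => /nbhs_ballP [r r_gt0 Hr]; exists r => // b Db ab.
by apply: Hr => //; rewrite -ball_normE.
Qed.

Lemma in_X_bounded {ξ : R -> 'rV[R]_n} : in_X θ ξ ->
  exists M, forall a, D a -> `|ξ a| <= M.
Proof.
move=> ξX; have [M [_ HM]] := compact_bounded (continuous_compact ξX delay_int_compact).
by exists (M + 1) => a Da; apply: (HM (M + 1)); [lra | exists a].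
Qed.

Lemma in_X_unif_continuous {ξ : R -> 'rV[R]_n} {e} : in_X θ ξ -> 0 < e ->
  exists2 d, 0 < d & forall a b, D a -> D b -> `|a - b| < d -> `|ξ a - ξ b| < e.
Proof.
move=> ξX e_gt0; have e2_gt0 : 0 < e / 2 by rewrite divr_gt0.
have /compact_near_coveringP/near_covering_withinP cover_D := delay_int_compact.
have : \forall d \near 0^'+, D `<=` [set a | forall b, D b -> `|a - b| < d -> `|ξ a - ξ b| < e].
  apply: cover_D => x Dx.
  have [r r_gt0 Hr] := in_X_continuous_at ξX Dx e2_gt0.
  have r2_gt0 : 0 < r / 2 by rewrite divr_gt0.
  near=> y d => Dy b Db yb.
  have xy : `|x - y| < r / 2.
    by near: y; apply/nbhs_ballP; exists (r / 2) => // y; rewrite -ball_normE.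
  have dr : d < r / 2 by near: d; exact: nbhs_right_lt.
  have xb : `|x - b| < r.
    by rewrite [r]splitr; apply: le_lt_trans (ler_distD y _ _) (ltrD xy (lt_trans yb dr)).
  rewrite [e]splitr; apply: le_lt_trans (ler_distD (ξ x) _ _) _.
  rewrite distrC ltrD // Hr //; apply: lt_trans xy _; lra.
move=> near_d; have [d [Hd d_gt0]] := filter_ex (filterI near_d (nbhs_right_gt 0)).
by exists d => // a b Da; exact: Hd.
Unshelve. all: by end_near.
Qed.

Lemma nbhs_X_dist_lt (ξ : X) e : 0 < e ->
  \forall η \near ξ, forall a, D a -> `|ξ a - η a| < e.
Proof.
move=> e_gt0; apply/uniform_nbhs; exists [set xy | ball xy.1 e xy.2]; split.
  by rewrite -entourage_from_ballE; exists e.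
by move=> η Hη a Da; have := Hη a Da; rewrite -ball_normE.
Qed.

Section CompactInX.
Context {S : set (R -> 'rV[R]_n)}.
Hypotheses (S_X : S `<=` in_X θ) (S_compact : @compact X S).

Lemma compact_in_X_bounded : exists M, forall ξ a, S ξ -> D a -> `|ξ a| <= M.
Proof.
have : \forall M \near +oo, S `<=` (fun ξ : X => forall a, D a -> `|ξ a| <= M).
  apply: ((@compact_near_coveringP X S).1 S_compact R +oo) => ξ Sξ.
  have [M HM] := in_X_bounded (S_X ξ Sξ).
  near=> η k => /= a Da.
  have ξη : `|ξ a - η a| < 1 by move: a Da; near: η; exact: nbhs_X_dist_lt.
  have Mk : M + 1 <= k by near: k; apply: nbhs_pinfty_ge; rewrite num_real.
  have := ler_distD (ξ a) 0 (η a); rewrite !sub0r !normrN.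
  have := HM a Da; lra.
by case/filter_ex => M HM; exists M => ξ a /HM; apply.
Unshelve. all: by end_near.
Qed.

Lemma compact_in_X_unif_equicontinuous {e} : 0 < e ->
  exists2 d, 0 < d & forall ξ a b, S ξ -> D a -> D b -> `|a - b| < d -> `|ξ a - ξ b| < e.
Proof.
move=> e_gt0; have e3_gt0 : 0 < e / 3 by rewrite divr_gt0.
have : \forall d \near 0^'+, S `<=`
    (fun ξ : X => forall a b, D a -> D b -> `|a - b| < d -> `|ξ a - ξ b| < e).
  apply: ((@compact_near_coveringP X S).1 S_compact R 0^'+) => ξ Sξ.
  have [d0 d0_gt0 Hd0] := in_X_unif_continuous (S_X ξ Sξ) e3_gt0.
  near=> η d => /= a b Da Db ab.
  have ξη c : D c -> `|ξ c - η c| < e / 3 by move: c; near: η; exact: nbhs_X_dist_lt.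
  have dd0 : d < d0 by near: d; exact: nbhs_right_lt.
  have ξab := Hd0 a b Da Db (lt_trans ab dd0).
  have := ξη a Da; have := ξη b Db.
  have := ler_distD (ξ a) (η a) (η b); have := ler_distD (ξ b) (ξ a) (η b).
  rewrite (distrC (η a) (ξ a)); lra.
move=> near_d; have [d [Hd d_gt0]] := filter_ex (filterI near_d (nbhs_right_gt 0)).
by exists d => // ξ a b /Hd; apply.
Unshelve. all: by end_near.
Qed.

End CompactInX.

Lemma open_eq_on (O : set X) (g h : X) : open O -> O h -> {in D, g =1 h} -> O g.
Proof.
move=> oO Oh gh; have /uniform_nbhs [E [entE EO]] : nbhs h O by exact: open_nbhs_nbhs.
by apply: EO => y Dy; rewrite gh ?inE //; exact: entourage_refl.
Qed.

(* Xspace does not separate functions agreeing on [-θ, 0], so its compact sets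
   need not be closed; saturating for that relation preserves compactness. *)
Lemma compact_eq_on {C : set X} :
  compact C -> compact [set g : X | exists2 h, C h & {in D, g =1 h}].
Proof.
move=> cC F PF Fsat.
pose tr (B : set X) : set X := [set h | C h /\ exists2 g, B g & {in D, g =1 h}].
have G_proper : ProperFilter (filter_from F tr).
  apply: filter_from_proper; last first.
    move=> B FB; have [g [Bg [h Ch gh]]] := filter_ex (filterI FB Fsat).
    by exists h; split => //; exists g.
  apply: filter_from_filter; first by exists setT; exact: filterT.
  move=> B1 B2 FB1 FB2; exists (B1 `&` B2); first exact: filterI.
  by move=> h [Ch [g [B1g B2g] gh]]; split; split => //; exists g.
have G_C : filter_from F tr C by exists setT; [exact: filterT | move=> h []].
have [c [Cc clc]] := cC _ G_proper G_C.
exists c; split; first by exists c.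
move=> B N FB; rewrite nbhsE; case=> O [oO Oc] ON.
have G_trB : filter_from F tr (tr B) by exists B.
have [h [[_ [g Bg gh]] Oh]] := clc _ _ G_trB (open_nbhs_nbhs (conj oO Oc)).
by exists g; split => //; apply: ON; exact: open_eq_on oO Oh gh.
Qed.

Section PositiveDelay.
Hypothesis θ_gt0 : 0 < θ.

Lemma min0_in_delay {q} : - θ <= q -> D (Num.min q 0).
Proof.
move=> q_ge; apply/delay_intP; rewrite ge_min lexx orbT andbT le_min q_ge.
by rewrite oppr_le0 ltW.
Qed.

Let clamp (s : R) : R := Num.max (- θ) (Num.min s 0).

Let clamp_in s : D (clamp s).
Proof.
apply/delay_intP; rewrite /clamp le_max lexx /= ge_max oppr_le0 (ltW θ_gt0) /=.
by rewrite ge_min lexx orbT.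
Qed.

Let clamp_id s : D s -> clamp s = s.
Proof.
by move=> /delay_intP/andP[s_ge s_le]; rewrite /clamp (min_l s_le) (max_r s_ge).
Qed.

Let ler_dist_clamp a b : `|clamp a - clamp b| <= `|a - b|.
Proof.
rewrite /clamp !(maxC (- θ)); apply: le_trans (ler_dist_max _ _ _) _.
exact: ler_dist_min.
Qed.

(* Extending by constants outside [-θ, 0] moves the family to functions on the
   locally compact line, where the library's Ascoli theorem applies; clamp is
   1-Lipschitz, so equicontinuity is preserved. *)
Let clamp_ext (g : R -> 'rV[R]_n) : R -> 'rV[R]_n := g \o clamp.

Let clamp_extE (g : R -> 'rV[R]_n) s : D s -> clamp_ext g s = g s.
Proof. by move=> Ds; rewrite /clamp_ext /= clamp_id. Qed.

Let clamp_ext_continuous (g : X) :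
  {family compact, clamp_ext @ (nbhs g) --> (clamp_ext g : fc)}.
Proof.
apply/fam_cvgP => K _ P /uniform_nbhs [E [entE EP]].
apply/uniform_nbhs; exists E; split => // h Eh.
by apply: EP => y _; apply: Eh; exact: clamp_in.
Qed.

Let family_compact_to_X (g : fc) : nbhs g --> (g : X).
Proof. by move/fam_cvgP: (@cvg_id _ (nbhs g)); apply; exact: delay_int_compact. Qed.

Lemma equicontinuous_compact_closure (A : set (R -> 'rV[R]_n)) (M : R) :
  (forall g s, A g -> D s -> `|g s| <= M) ->
  (forall a e, D a -> 0 < e -> exists2 d, 0 < d &
     forall g b, A g -> D b -> `|a - b| < d -> `|g a - g b| < e) ->
  @compact X (@closure X A).
Proof.
move=> A_bd A_eq.
pose W : set fc := clamp_ext @` A.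
have W_eq : equicontinuous W id.
  move=> x E; rewrite -entourage_from_ballE => -[e /= e_gt0 eE].
  have [d d_gt0 Hd] := A_eq (clamp x) e (clamp_in x) e_gt0.
  exists d => //= y xy _ [g Ag <-]; apply: eE; rewrite /= -ball_normE /=.
  apply: Hd => //.
  exact: le_lt_trans (ler_dist_clamp _ _) xy.
have W_ptws : pointwise_precompact W id.
  move=> x; apply: (@precompact_subset _ _ (closed_ball_ Num.norm (0 : 'rV[R]_n) M)).
    move=> _ [_ [g Ag <-] <-]; rewrite /closed_ball_ /= sub0r normrN.
    exact: A_bd (clamp_in x).
  apply: compact_precompact; first exact: norm_hausdorff.
  apply: bounded_closed_compact; last exact: closed_closed_ball_.
  exists M; split; first by rewrite num_real.
  by move=> r Mr v; rewrite /closed_ball_ /= sub0r normrN => /le_trans; apply; exact: ltW.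
have cW : compact (closure W).
  by rewrite -precompactE; case: ((Ascoli W (@locally_compactR R)).1 (conj W_ptws W_eq)).
have cWX : @compact X (closure W).
  rewrite -[closure W]image_id; apply: continuous_compact cW.
  by apply: continuous_subspaceT => g; exact: family_compact_to_X.
apply: (subclosed_compact _ (compact_eq_on cWX)); first exact: closed_closure.
move=> g clAg; exists (clamp_ext g); last by move=> s /set_mem /clamp_extE ->.
move=> B /clamp_ext_continuous /clAg [a [Aa Ba]].
by exists (clamp_ext a); split => //; exists a.
Qed.

End PositiveDelay.

End DelayWindow.

Section Solution.
Context {R : realType} {n m : nat} {θ : R} {f : (R -> 'rV[R]_n) -> 'rV[R]_m -> 'rV[R]_n}.
Context {ξ : R -> 'rV[R]_n} {u : R -> 'rV[R]_m} {x : R -> 'rV[R]_n}.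
Hypothesis θ_gt0 : 0 < θ.
Hypothesis ξ_X : in_X θ ξ.
Hypothesis x_sol : is_solution θ f ξ u x.
Implicit Types (p q s t c e r : R).
Local Notation D := (delay_int θ).
Local Notation mu := (@lebesgue_measure R).

Let rhs i s := f (hist_at x s) (u s) ord0 i.

Lemma solution_init {s} : D s -> x s = ξ s.
Proof. exact: x_sol.1. Qed.

Lemma solutionE i {t} : 0 <= t ->
  x t ord0 i = ξ 0 ord0 i + parameterized_integral mu 0 t (rhs i).
Proof. by move=> t_ge0; rewrite (x_sol.2 t t_ge0 i).2. Qed.

Lemma solution_continuous_nonneg {c e} : 0 <= c -> 0 < e ->
  exists2 r, 0 < r & forall c', 0 <= c' -> `|c - c'| < r -> `|x c - x c'| < e.
Proof.
move=> c_ge0 e_gt0; have c1_ge0 : 0 <= c + 1 by lra.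
have c_in : `[0, c + 1]%classic c by rewrite /= in_itv /=; apply/andP; split; lra.
have near_c i : \forall t \near c, `[0, c + 1]%classic t -> `|x c ord0 i - x t ord0 i| < e.
  have [rhs_int _] := x_sol.2 (c + 1) c1_ge0 i.
  have := parameterized_integral_continuous c1_ge0 rhs_int.
  move=> /subspace_continuousP /(_ c c_in) /cvgrPdist_lt /(_ e e_gt0).
  rewrite near_withinE; apply: filterS => t Ht /[dup] t_in.
  rewrite /= in_itv /= => /andP[t_ge0 _].
  by rewrite (solutionE i c_ge0) (solutionE i t_ge0) opprD addrACA subrr add0r; exact: Ht.
have [r r_gt0 Hr] := (nbhs_ballP _ _).1 (filter_forall _ near_c).
exists (Num.min r 1); first by rewrite lt_min r_gt0 ltr01.
move=> c' c'_ge0; rewrite lt_min => /andP[cr c1].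
apply: rV_norm_lt => // i; rewrite !mxE; apply: (Hr c'); first by rewrite -ball_normE.
rewrite /= in_itv /= c'_ge0 /=; move: c1; rewrite distrC ltr_norml; lra.
Qed.

Lemma solution_split {q} : - θ <= q -> x q = ξ (Num.min q 0) + x (Num.max q 0) - ξ 0.
Proof.
move=> q_ge; have x0 : x 0 = ξ 0 by apply/solution_init/delay_int0/ltW.
case: (leP q 0) => [q_le0 | _]; last by rewrite addrAC subrr add0r.
by rewrite x0 addrK solution_init //; apply/delay_intP; rewrite q_ge q_le0.
Qed.

Lemma ler_solution_dist {p q} : - θ <= p -> - θ <= q ->
  `|x p - x q| <= `|ξ (Num.min p 0) - ξ (Num.min q 0)| + `|x (Num.max p 0) - x (Num.max q 0)|.
Proof.
move=> p_ge q_ge; rewrite (solution_split p_ge) (solution_split q_ge).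
by rewrite opprB addrA subrK opprD addrACA ler_normD.
Qed.

Lemma solution_continuous {p e} : - θ <= p -> 0 < e ->
  exists2 r, 0 < r & forall q, - θ <= q -> `|p - q| < r -> `|x p - x q| < e.
Proof.
move=> p_ge e_gt0; have e2_gt0 : 0 < e / 2 by rewrite divr_gt0.
have max_ge0 (q : R) : 0 <= Num.max q 0 by rewrite le_max lexx orbT.
have [r1 r1_gt0 H1] := in_X_continuous_at ξ_X (min0_in_delay θ_gt0 p_ge) e2_gt0.
have [r2 r2_gt0 H2] := solution_continuous_nonneg (max_ge0 p) e2_gt0.
exists (Num.min r1 r2) => [|q q_ge]; first by rewrite lt_min r1_gt0 r2_gt0.
rewrite lt_min => /andP[pq1 pq2]; apply: le_lt_trans (ler_solution_dist p_ge q_ge) _.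
rewrite [e]splitr ltrD //.
  by apply: H1; [exact: (min0_in_delay θ_gt0 q_ge) | exact: le_lt_trans (ler_dist_min _ _ _) pq1].
by apply: H2; [exact: max_ge0 | exact: le_lt_trans (ler_dist_max _ _ _) pq2].
Qed.

Lemma hist_at_in_X {t} : 0 <= t -> in_X θ (hist_at x t).
Proof.
move=> t_ge0; apply/subspace_continuousP => a /delay_intP/andP[a_ge a_le].
apply/cvgrPdist_lt => e e_gt0; rewrite near_withinE.
have ta_ge : - θ <= t + a by lra.
have [r r_gt0 Hr] := solution_continuous ta_ge e_gt0.
apply/nbhs_ballP; exists r => // b; rewrite -ball_normE /= => ab /delay_intP/andP[b_ge _].
by apply: Hr; [lra | rewrite opprD addrACA subrr add0r].
Qed.

Context {T K : R}.
Hypothesis rhs_le : forall s, 0 <= s <= T -> `|f (hist_at x s) (u s)| <= K.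

Lemma solution_incr_le p q : 0 <= q <= p -> p <= T -> `|x p - x q| <= K * (p - q).
Proof.
move=> /andP[q_ge0 qp] pT; have p_ge0 : 0 <= p := le_trans q_ge0 qp.
have K_ge0 : 0 <= K.
  by apply: le_trans (normr_ge0 _) (rhs_le q _); rewrite q_ge0 (le_trans qp pT).
apply: rV_norm_le => [|i]; first by rewrite mulr_ge0 // subr_ge0.
rewrite !mxE (solutionE i p_ge0) (solutionE i q_ge0) opprD addrACA subrr add0r.
have [rhs_int _] := x_sol.2 p p_ge0 i.
rewrite /parameterized_integral (Rintegral_itvB rhs_int) ?bnd_simp //.
apply: le_normr_Rintegral_oc => //.
  by apply: integrableS rhs_int => //; apply: subset_itvr; rewrite bnd_simp.
move=> s /=; rewrite in_itv /= => /andP[qs sp].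
by apply: le_trans (ler_rV_coord_norm _ i) _; apply: rhs_le; apply/andP; split; lra.
Qed.

Lemma solution_lipschitz : {in `[0, T] &, forall p q, `|x p - x q| <= K * `|p - q|}.
Proof.
move=> p q; rewrite !in_itv /= => /andP[p_ge0 pT] /andP[q_ge0 qT].
case: (leP q p) => [qp | /ltW pq].
  by rewrite ger0_norm ?subr_ge0 // solution_incr_le // q_ge0.
by rewrite distrC (distrC p) ger0_norm ?subr_ge0 // solution_incr_le // p_ge0.
Qed.

End Solution.

Section ReachableSet.
Context {R : realType} {n m : nat} {θ : R} {f : (R -> 'rV[R]_n) -> 'rV[R]_m -> 'rV[R]_n}.
Context {S : set (R -> 'rV[R]_n)} {U : set 'rV[R]_m} {T : R}.
Hypotheses (θ_gt0 : 0 < θ) (T_gt0 : 0 < T) (S_X : S `<=` in_X θ).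
Implicit Types (p q s t a b e d rS MU : R).
Local Notation D := (delay_int θ).

Lemma reach_rhs_bounded {rS MU : R} :
  f_bounded_on_bounded θ f -> robustly_forward_complete θ f ->
  (forall ξ a, S ξ -> D a -> `|ξ a| <= rS) -> (forall v, U v -> `|v| <= MU) ->
  exists2 K, 0 <= K & forall ξ u x s, input_MU U u -> S ξ -> is_solution θ f ξ u x ->
    0 <= s <= T -> `|f (hist_at x s) (u s)| <= K.
Proof.
move=> f_bd [_ rfc] S_le U_le; pose r := `|rS| + `|MU| + 1.
have [rS_r MU_r r_gt0] : [/\ rS <= r, MU <= r & 0 < r].
  by have := ler_norm rS; have := ler_norm MU; have := normr_ge0 rS; have := normr_ge0 MU;
    rewrite /r; split; lra.
have [K0 hist_le] := rfc T r T_gt0 r_gt0.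
have [Kf f_le] := f_bd (`|K0| + r).
exists `|Kf| => // ξ u x s [u_M u_U] Sξ x_sol s_in; have [s_ge0 _] := andP s_in.
have u_le t : 0 <= t -> `|u t| <= r by move=> t_ge0; exact: le_trans (U_le _ (u_U t t_ge0)) MU_r.
have ξ_le : Xnorm θ ξ <= r.
  by apply: Xnorm_le (ltW θ_gt0) _ => a Da; exact: le_trans (S_le ξ a Sξ Da) rS_r.
have u_ess : ess_bounded_by u r by apply: aeW => t /=; rewrite in_itv /= andbT; exact: u_le.
apply: le_trans (ler_norm Kf); apply: f_le.
- exact: (hist_at_in_X θ_gt0 (S_X ξ Sξ) x_sol s_ge0).
- by have := hist_le ξ u x s (S_X ξ Sξ) ξ_le u_M u_ess x_sol s_in; have := ler_norm K0; lra.
- by have := u_le s s_ge0; have := normr_ge0 K0; lra.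
Qed.

Context {L : R}.
Hypothesis L_ge0 : 0 <= L.
Hypothesis reach_lipschitz : forall ξ u x, input_MU U u -> S ξ -> is_solution θ f ξ u x ->
  {in `[0, T] &, forall p q, `|x p - x q| <= L * `|p - q|}.

Let max0_in {p} : p <= T -> Num.max p 0 \in `[0, T].
Proof. by move=> pT; rewrite in_itv /= le_max lexx orbT ge_max pT ltW. Qed.

Let shift_in {t s} : 0 <= t <= T -> D s -> - θ <= t + s <= T.
Proof. by move=> /andP[t_ge0 tT] /delay_intP/andP[s_ge s_le]; apply/andP; split; lra. Qed.

Lemma reach_set_bounded {rS} : (forall ξ a, S ξ -> D a -> `|ξ a| <= rS) ->
  forall g s, reach_set θ f S U T g -> D s -> `|g s| <= rS + L * T.
Proof.
move=> S_le _ s [t [ξ [u [x [t_in u_U Sξ x_sol ->]]]]] Ds.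
have /andP[ts_ge tsT] := shift_in t_in Ds; have D0 := delay_int0 (ltW θ_gt0).
rewrite /hist_at (solution_split θ_gt0 x_sol ts_ge) -addrA -(solution_init x_sol D0).
apply: le_trans (ler_normD _ _) (lerD (S_le _ _ Sξ (min0_in_delay θ_gt0 ts_ge)) _).
have T0_in : 0 \in `[0, T] by rewrite in_itv /= lexx ltW.
apply: le_trans (reach_lipschitz ξ u x u_U Sξ x_sol _ _ (max0_in tsT) T0_in) _.
by rewrite subr0 ger0_norm ?le_max ?lexx ?orbT // ler_wpM2l // ge_max tsT ltW.
Qed.

Hypothesis S_compact : @compact (Xspace θ n) S.

Lemma reach_set_unif_equicontinuous {e} : 0 < e -> exists2 d, 0 < d &
  forall g a b, reach_set θ f S U T g -> D a -> D b -> `|a - b| < d -> `|g a - g b| < e.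
Proof.
move=> e_gt0; have e2_gt0 : 0 < e / 2 by rewrite divr_gt0.
have [d1 d1_gt0 S_eq] := compact_in_X_unif_equicontinuous S_X S_compact e2_gt0.
pose d2 := e / 2 / (L + 1); have d2_gt0 : 0 < d2 by rewrite divr_gt0 // ltr_wpDl.
exists (Num.min d1 d2) => [|_ a b [t [ξ [u [x [t_in u_U Sξ x_sol ->]]]]] Da Db].
  by rewrite lt_min d1_gt0 d2_gt0.
rewrite lt_min => /andP[ab1 ab2].
have /andP[ta_ge taT] := shift_in t_in Da; have /andP[tb_ge tbT] := shift_in t_in Db.
have tab : `|t + a - (t + b)| = `|a - b| by rewrite opprD addrACA subrr add0r.
rewrite /hist_at; apply: le_lt_trans (ler_solution_dist θ_gt0 x_sol ta_ge tb_ge) _.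
rewrite [e]splitr ltrD //.
  apply: (S_eq _ _ _ Sξ (min0_in_delay θ_gt0 ta_ge) (min0_in_delay θ_gt0 tb_ge)).
  by apply: le_lt_trans (ler_dist_min _ _ _) _; rewrite tab.
apply: le_lt_trans (reach_lipschitz ξ u x u_U Sξ x_sol _ _ (max0_in taT) (max0_in tbT)) _.
apply: le_lt_trans (ler_wpM2l L_ge0 (ler_dist_max _ _ _)) _; rewrite tab.
apply: le_lt_trans (ler_wpM2l L_ge0 (ltW ab2)) _.
by rewrite /d2 mulrA ltr_pdivrMr ?ltr_wpDl //; nra.
Qed.

End ReachableSet.

Theorem lemma2p3 (R : realType) (n m : nat) (θ : R)
    (f : (R -> 'rV[R]_n) -> 'rV[R]_m -> 'rV[R]_n) :
  0 < θ ->
  f_local θ f -> f_locally_lipschitz θ f -> f_bounded_on_bounded θ f ->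
  robustly_forward_complete θ f ->
  forall (S : set (R -> 'rV[R]_n)) (U : set 'rV[R]_m) (T : R),
    S `<=` in_X θ ->
    @compact (Xspace θ n) S ->
    bounded_set U ->
    0 < T ->
    @compact (Xspace θ n) (@closure (Xspace θ n) (reach_set θ f S U T)).
Proof.
move=> θ_gt0 _ _ f_bd rfc S U T S_X S_compact U_bd T_gt0.
have [rS S_le] := compact_in_X_bounded S_X S_compact.
have [MU U_le] : exists MU, forall v, U v -> `|v| <= MU.
  by case: U_bd => M [_ HM]; exists (M + 1) => v Uv; apply: (HM (M + 1)); [lra | exact: Uv].
have [K K_ge0 rhs_le] := reach_rhs_bounded θ_gt0 T_gt0 S_X f_bd rfc S_le U_le.
have reach_lip ξ u x : input_MU U u -> S ξ -> is_solution θ f ξ u x ->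
    {in `[0, T] &, forall p q, `|x p - x q| <= K * `|p - q|}.
  by move=> u_U Sξ x_sol; exact: (solution_lipschitz x_sol (fun s => rhs_le ξ u x s u_U Sξ x_sol)).
apply: (equicontinuous_compact_closure θ_gt0 _ (rS + K * T)).
  exact: (reach_set_bounded θ_gt0 T_gt0 K_ge0 reach_lip S_le).
move=> a e Da e_gt0.
have [d d_gt0 Hd] := reach_set_unif_equicontinuous θ_gt0 T_gt0 S_X K_ge0 reach_lip S_compact e_gt0.
by exists d => // g b Rg; exact: Hd.
Qed.
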